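(* Let $a,b\in\mathbb{R}$ with one of the following: (i) $b<0$, $a>0$ and $(J,E)\in D_1$; (ii) $b>0$, $a\ge 0$ and $(J,E)\in D_2$; (iii) $b>0$, $a<0$ and $(J,E)\in D_3$. Let $\Pi(y)=-by^3-2ay^2+4Ey-2J^2$, and denote its roots by $0<y_1<y_2<y_3$ in case (i), and by $y_3<0<y_1<y_2$ in cases (ii) and (iii). Then $$T(J,E)=\sqrt{2}\int_{y_1}^{y_2}\frac{dy}{\sqrt{-b(y-y_1)(y-y_2)(y-y_3)}}=2\sqrt{2}\int_0^{\pi/2}\frac{d\phi}{\sqrt{b(S(\phi)-y_3)}},$$ where $S(\phi)=y_1\cos^2\phi+y_2\sin^2\phi$.
   Context: Consider the ODE $u_{xx}+au+b|u|^2u=0$ for $u:\mathbb{R}\to\mathbb{C}$, with conserved quantities $J=\operatorname{Im}(u\bar u_x)$ and $E=\frac12|u_x|^2+\frac a2|u|^2+\frac b4|u|^4$. For $J\neq 0$, writing $u=re^{i\phi}$, one has $E=\frac{r_x^2}{2}+V_J(r)$ with potential $V_J(r)=\frac{J^2}{2r^2}+a\frac{r^2}{2}+b\frac{r^4}{4}$. For $J\ge 0$ one parametrizes $J=Q(Q^2-a)/b$ (with $\frac a3<Q^2<a$ when $b<0$; with $Q^2\ge a$ when $b>0,a\ge 0$; with $Q\in\mathbb{R}$ when $b>0,a<0$; $Q$ of the same sign as $J$) and sets $E_-(J)=\frac{1}{4b}(Q^2-a)(3Q^2+a)$ (the value of $V_J$ at its local minimum $r_Q=\sqrt{(Q^2-a)/b}$).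 When $b<0$ and $0<J^2<\frac{4a^3}{27b^2}$, one also writes $J=q(q^2-a)/b$ with $0<q^2<a/3$, $q$ of the sign of $J$, and sets $E_+(J)=\frac1{4b}(q^2-a)(3q^2+a)$ (value of $V_J$ at its local maximum $r_q=\sqrt{(q^2-a)/b}$). Domains: $D_1=\{(J,E):0<J<\sqrt{\frac{4a^3}{27b^2}},\ E_-(J)<E<E_+(J)\}$ (for $b<0,a>0$); $D_2=\{(J,E):J>0,\ E>E_-(J)\}$ (for $b>0,a\ge0$); $D_3=\{(J,E):J>0,\ E>E_-(J)\}$ (for $b>0,a<0$). For $(J,E)$ in these domains, $E-V_J(r)$ has positive roots $r_1<r_2$ (and a third $r_3>r_2$ in the case $b<0$), and the fundamental period of the modulus of the corresponding solution $u$ is $T(J,E)=2\int_{r_1}^{r_2}\frac{dr}{\sqrt{2(E-V_J(r))}}$. *)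

From HB Require Import structures.
From mathcomp Require Import all_boot all_order all_algebra.
From mathcomp Require Import all_classical all_reals all_analysis.
Set Implicit Arguments. Unset Strict Implicit. Unset Printing Implicit Defensive.
Import Order.TTheory GRing.Theory Num.Theory.
Import numFieldNormedType.Exports.
Local Open Scope classical_set_scope.
Local Open Scope ring_scope.

Definition VJ (R : realType) (a b J r : R) : R :=
  J ^+ 2 / (2 * r ^+ 2) + a * r ^+ 2 / 2 + b * r ^+ 4 / 4.

(* E_-(J) and E_+(J) as functions of the parameters Q, q *)
Definition Eform (R : realType) (a b Q : R) : R :=
  (Q ^+ 2 - a) * (3 * Q ^+ 2 + a) / (4 * b).

Definition Pi_poly (R : realType) (a b J E y : R) : R :=
  - b * y ^+ 3 - 2 * a * y ^+ 2 + 4 * E * y - 2 * J ^+ 2.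

Definition D1 (R : realType) (a b J E : R) : Prop :=
  0 < J /\ J < Num.sqrt (4 * a ^+ 3 / (27 * b ^+ 2)) /\
  (exists Q : R, 0 < Q /\ a / 3 < Q ^+ 2 /\ Q ^+ 2 < a /\
     J = Q * (Q ^+ 2 - a) / b /\ Eform a b Q < E) /\
  (exists q : R, 0 < q /\ 0 < q ^+ 2 /\ q ^+ 2 < a / 3 /\
     J = q * (q ^+ 2 - a) / b /\ E < Eform a b q).

Definition D2 (R : realType) (a b J E : R) : Prop :=
  0 < J /\
  (exists Q : R, 0 < Q /\ a <= Q ^+ 2 /\
     J = Q * (Q ^+ 2 - a) / b /\ Eform a b Q < E).

Definition D3 (R : realType) (a b J E : R) : Prop :=
  0 < J /\
  (exists Q : R, 0 < Q /\ J = Q * (Q ^+ 2 - a) / b /\ Eform a b Q < E).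

Definition Tperiod (R : realType) (a b J E r1 r2 : R) : \bar R :=
  (2%:E * \int[@lebesgue_measure R]_(r in `]r1%R, r2%R[)
            (1 / Num.sqrt (2 * (E - VJ a b J r)))%:E)%E.

From HB Require Import structures.
From mathcomp Require Import all_boot all_order all_algebra.
From mathcomp Require Import all_classical all_reals all_analysis.
From mathcomp Require Import measurable_realfun ring lra.
Set Implicit Arguments. Unset Strict Implicit. Unset Printing Implicit Defensive.
Import Order.TTheory GRing.Theory Num.Theory.
Import numFieldNormedType.Exports.
Local Open Scope classical_set_scope.
Local Open Scope ring_scope.

(** Since [E - V_J r = Pi (r^2) / (4 r^2)] and the positive turning points satisfy
    [r1^2 = y1], [r2^2 = y2], the substitution [y = r^2] turns [T] into
    [sqrt 2 * int_y1^y2 dy / sqrt (-b (y - y1) (y - y2) (y - y3))].  The substitution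
    [y = y1 cos^2 t + y2 sin^2 t] then cancels the factor
    [(y - y1) (y2 - y) = ((y2 - y1) sin t cos t)^2 = (dy/dt / 2)^2].  Both integrands
    blow up at the ends of the interval, so each change of variables is made on an
    exhausting sequence of compact subintervals and passed to the limit by monotone
    convergence. *)

Section improper_substitution.
Context {R : realType}.
Notation mu := (@lebesgue_measure R).
Implicit Types (c d : R) (cn dn : R^nat) (f F G : R -> R).

Record itv_exhaustion c d cn dn : Prop := ItvExhaustion {
  exhaustion_lbound : forall n, c < cn n;
  exhaustion_lt : forall n, cn n < dn n;
  exhaustion_ubound : forall n, dn n < d;
  exhaustion_nonincr : nonincreasing_seq cn;
  exhaustion_nondecr : nondecreasing_seq dn;
  exhaustion_cvg_lbound : cn n @[n --> \oo] --> c;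
  exhaustion_cvg_ubound : dn n @[n --> \oo] --> d }.

Lemma itv_exhaustion_exists c d : c < d -> exists cn dn, itv_exhaustion c d cn dn.
Proof.
move=> cd; pose k := (d - c) / 3.
have k0 : 0 < k by rewrite divr_gt0 // subr_gt0.
have kh_gt0 n : 0 < k * harmonic n by rewrite mulr_gt0 // harmonic_gt0.
have kh_le n : k * harmonic n <= k.
  by rewrite ger_pMr // invr_le1 ?ler1n // unitfE pnatr_eq0.
have kh_nonincr m n : (m <= n)%N -> k * harmonic n <= k * harmonic m.
  by move=> mn; rewrite ler_pM2l //= lef_pV2 ?posrE // ler_nat.
have h_cvg : k * harmonic n @[n --> \oo] --> 0.
  by rewrite -(mulr0 k); exact: cvgMl_tmp cvg_harmonic.
exists (fun n => c + k * harmonic n), (fun n => d - k * harmonic n); split.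
- by move=> n; rewrite ltrDl.
- by move=> n; have := kh_le n; have := kh_gt0 n; rewrite /k; lra.
- by move=> n; rewrite ltrBlDr ltrDl.
- by move=> m n /kh_nonincr; rewrite lerD2l.
- by move=> m n /kh_nonincr; rewrite lerD2l lerN2.
- by rewrite -[X in _ --> X]addr0; apply: cvgD => //; exact: cvg_cst.
- by rewrite -[X in _ --> X]subr0; apply: cvgB => //; exact: cvg_cst.
Qed.

Lemma itv_exhaustion_sub c d cn dn n : itv_exhaustion c d cn dn ->
  `[cn n, dn n] `<=` `]c, d[%classic.
Proof.
move=> [cgt _ dlt _ _ _ _] x /=; rewrite !in_itv /= => /andP[cx xd].
by rewrite (lt_le_trans (cgt n) cx) (le_lt_trans xd (dlt n)).
Qed.

Lemma itv_exhaustion_bigcup c d cn dn : itv_exhaustion c d cn dn ->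
  `]c, d[%classic = \bigcup_n `[cn n, dn n]%classic.
Proof.
move=> ex; apply/seteqP; split; last first.
  by move=> x [n _]; exact: (itv_exhaustion_sub ex).
move=> x /=; rewrite in_itv /= => /andP[cx xd].
have [_ _ _ _ _ cn_c dn_d] := ex.
have near_x : \forall n \near \oo, cn n < x /\ x < dn n.
  by near=> n; split; near: n; [exact: cvgr_lt cn_c _ cx | exact: cvgr_gt dn_d _ xd].
have [n [cnx xdn]] := filter_ex near_x.
by exists n => //=; rewrite in_itv /= !ltW.
Unshelve. all: end_near. Qed.

Lemma itv_exhaustion_comp F c d cn dn :
  {in `[c, d] &, {homo F : x y / x < y}} ->
  {for c, continuous F} -> {for d, continuous F} ->
  itv_exhaustion c d cn dn -> itv_exhaustion (F c) (F d) (F \o cn) (F \o dn).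
Proof.
move=> incF cFc cFd ex; have [cgt lt dlt nincr ndecr cn_c dn_d] := ex.
have cn_in n : cn n \in `[c, d].
  by rewrite in_itv /= (ltW (cgt n)) (ltW (lt_trans (lt n) (dlt n))).
have dn_in n : dn n \in `[c, d].
  by rewrite in_itv /= (ltW (dlt n)) (ltW (lt_trans (cgt n) (lt n))).
have cd : c <= d by apply: ltW; apply: lt_trans (cgt 0%N) (lt_trans (lt 0%N) (dlt 0%N)).
have c_in : c \in `[c, d] by rewrite in_itv /= lexx cd.
have d_in : d \in `[c, d] by rewrite in_itv /= lexx cd.
have leF : {in `[c, d] &, {homo F : x y / x <= y}}.
  by move=> x y xin yin; rewrite le_eqVlt => /predU1P[->//|/(incF _ _ xin yin)/ltW].
split => [n|n|n|m n mn|m n mn||] /=.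
- exact: incF.
- exact: incF.
- exact: incF.
- exact/leF/nincr.
- exact/leF/ndecr.
- exact: continuous_cvg cFc cn_c.
- exact: continuous_cvg cFd dn_d.
Qed.

Lemma ge0_integral_exhaustion_cvg f c d cn dn : itv_exhaustion c d cn dn ->
  measurable_fun `]c, d[ f -> {in `]c, d[, forall x, 0 <= f x} ->
  (\int[mu]_(x in `[cn n, dn n]) (f x)%:E @[n --> \oo] -->
   \int[mu]_(x in `]c, d[) (f x)%:E)%E.
Proof.
move=> ex mf f0; rewrite (itv_exhaustion_bigcup ex).
have [_ _ _ nincr ndecr _ _] := ex.
apply: ge0_nondecreasing_set_cvg_integral => [m n mn|n|n|n x xn].
- rewrite subsetEset; apply: subset_itv; rewrite bnd_simp.
    exact: nincr.
  exact: ndecr.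
- exact: measurable_itv.
- apply/measurable_EFinP; apply: measurable_funS mf => //.
  exact: itv_exhaustion_sub.
- by rewrite lee_fin; apply: f0; exact: (itv_exhaustion_sub ex xn).
Qed.

Lemma derivable_continuous f : (forall x : R^o, derivable f x 1) -> continuous f.
Proof. by move=> df x; apply/differentiable_continuous/derivable1_diffP. Qed.

Lemma continuous_inv_sqrt f x : {for x, continuous f} -> 0 < f x ->
  {for x, continuous (fun y => 1 / Num.sqrt (f y))}.
Proof.
move=> cf fx0.
have -> : (fun y => 1 / Num.sqrt (f y)) = (fun y => (Num.sqrt (f y))^-1).
  by apply/funext => y; rewrite div1r.
apply: continuousV; first by rewrite sqrtr_eq0 -ltNge.
exact: continuous_comp cf (@sqrt_continuous _ _).
Qed.

Lemma eq_inv_sqrtr (u v : R) : 0 < v -> v ^+ 2 * u = 1 -> 1 / Num.sqrt u = v.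
Proof.
move=> v0 vu; have v_neq0 : v != 0 by rewrite gt_eqF.
have -> : u = v^-1 ^+ 2 by apply: (mulfI (expf_neq0 2 v_neq0)); rewrite vu; field.
by rewrite sqrtr_sqr ger0_norm ?invr_ge0 ?ltW // div1r invrK.
Qed.

Lemma ge0_continuous_integralZl k f c d : 0 <= k ->
  {in `]c, d[, continuous f} -> {in `]c, d[, forall x, 0 <= f x} ->
  (\int[mu]_(x in `]c, d[) (k * f x)%:E = k%:E * \int[mu]_(x in `]c, d[) (f x)%:E)%E.
Proof.
move=> k0 cf f0; rewrite -ge0_integralZl_EFin //.
apply/measurable_EFinP; apply: open_continuous_measurable_fun => // x.
by rewrite inE; exact: cf.
Qed.

Section C1_substitution.
Variables (F F' : R -> R).
Hypothesis dF : forall x : R^o, is_derive x 1 F (F' x).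
Hypothesis cF' : continuous F'.

Let derive1_F : F^`()%classic = F'.
Proof. by apply/funext => x; rewrite derive1E; exact: derive_val. Qed.

Let continuous_F : continuous F.
Proof. exact: derivable_continuous. Qed.

Lemma integration_by_substitution_C1_cc G a b : a <= b ->
  {in `[a, b] &, {homo F : x y / x < y}} -> {in `[F a, F b], continuous G} ->
  (\int[mu]_(x in `[F a, F b]) (G x)%:E =
   \int[mu]_(x in `[a, b]) (G (F x) * F' x)%:E)%E.
Proof.
move=> ab incF cG; rewrite integration_by_substitution_increasing //.
- by apply: eq_integral => x _; rewrite derive1_F.
- by rewrite derive1_F => x _; exact: cF'.
- by apply/cvg_ex; exists (F' a); rewrite derive1_F; exact/cvg_at_right_filter/cF'.
- by apply/cvg_ex; exists (F' b); rewrite derive1_F; exact/cvg_at_left_filter/cF'.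
- by split=> [x _ //||]; [exact/cvg_at_right_filter/continuous_F
                        | exact/cvg_at_left_filter/continuous_F].
- by apply: continuous_in_subspaceT => x; rewrite inE; exact: cG.
Qed.

Lemma integration_by_substitution_C1_oo G a b : a < b ->
  {in `]a, b[, forall x, 0 < F' x} ->
  {in `]F a, F b[, continuous G} -> {in `]F a, F b[, forall x, 0 <= G x} ->
  (\int[mu]_(x in `]F a, F b[) (G x)%:E =
   \int[mu]_(x in `]a, b[) (G (F x) * F' x)%:E)%E.
Proof.
move=> ab F'0 cG G0.
have incF : {in `[a, b] &, {homo F : x y / x < y}}.
  apply: gtr0_derive1_lt_cc => [x _ //|x xab|].
    by rewrite derive1_F; exact: F'0.
  exact: continuous_subspaceT.
have F_in x : x \in `]a, b[ -> F x \in `]F a, F b[.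
  by move=> xab; have := increasing_image_oo ab incF (imageP F xab).
have [an [bn ex]] := itv_exhaustion_exists ab.
have exF := itv_exhaustion_comp incF (@continuous_F a) (@continuous_F b) ex.
have on_cc n : (\int[mu]_(x in `[F (an n), F (bn n)]) (G x)%:E =
    \int[mu]_(x in `[an n, bn n]) (G (F x) * F' x)%:E)%E.
  apply: integration_by_substitution_C1_cc => [||y yn].
  - exact/ltW/(exhaustion_lt ex).
  - move=> x y /(itv_exhaustion_sub ex) xab /(itv_exhaustion_sub ex) yab.
    by apply: incF; apply: subset_itv_oo_cc.
  - by apply: cG; exact: (itv_exhaustion_sub exF yn).
have mG : measurable_fun `]F a, F b[ G.
  by apply: open_continuous_measurable_fun => // y; rewrite inE; exact: cG.
have cGF : {in `]a, b[, continuous (fun x => G (F x) * F' x)}.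
  move=> x xab; apply: continuousM; last exact: cF'.
  by apply: continuous_comp; [exact: continuous_F | exact/cG/F_in].
have mGF : measurable_fun `]a, b[ (fun x => G (F x) * F' x).
  by apply: open_continuous_measurable_fun => // x; rewrite inE; exact: cGF.
have GF0 : {in `]a, b[, forall x, 0 <= G (F x) * F' x}.
  by move=> x xab; rewrite mulr_ge0 ?G0 ?F_in // ltW // F'0.
have := ge0_integral_exhaustion_cvg exF mG G0; rewrite (eq_cvg _ _ on_cc) => lim_G.
exact: cvg_unique lim_G (ge0_integral_exhaustion_cvg ex mGF GF0).
Qed.

End C1_substitution.

End improper_substitution.

Lemma cubic_factor (K : fieldType) (c3 c2 c1 c0 y1 y2 y3 : K) :
  let p y := c3 * y ^+ 3 + c2 * y ^+ 2 + c1 * y + c0 in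
  y1 != y2 -> y1 != y3 -> y2 != y3 -> p y1 = 0 -> p y2 = 0 -> p y3 = 0 ->
  forall y, p y = c3 * (y - y1) * (y - y2) * (y - y3).
Proof.
move=> p n12 n13 n23 p1 p2 p3 y; apply/eqP; rewrite -subr_eq0; apply/eqP.
(* Lagrange interpolation is exact on the quadratic [p - c3 (X - y1)(X - y2)(X - y3)]. *)
transitivity (p y1 * ((y - y2) * (y - y3) / ((y1 - y2) * (y1 - y3))) +
              p y2 * ((y - y1) * (y - y3) / ((y2 - y1) * (y2 - y3))) +
              p y3 * ((y - y1) * (y - y2) / ((y3 - y1) * (y3 - y2)))).
  rewrite /p; field.
  by rewrite !subr_eq0 (eq_sym y3 y2) (eq_sym y3 y1) (eq_sym y2 y1) n12 n13 n23.
by rewrite p1 p2 p3 !mul0r !addr0.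
Qed.

Section period.
Context {R : realType}.
Notation mu := (@lebesgue_measure R).
Implicit Types (a b J E r y : R).

Lemma Pi_poly_factor a b J E y1 y2 y3 :
  y1 != y2 -> y1 != y3 -> y2 != y3 ->
  Pi_poly a b J E y1 = 0 -> Pi_poly a b J E y2 = 0 -> Pi_poly a b J E y3 = 0 ->
  forall y, Pi_poly a b J E y = - b * (y - y1) * (y - y2) * (y - y3).
Proof.
have PiE y : Pi_poly a b J E y =
    - b * y ^+ 3 + - (2 * a) * y ^+ 2 + 4 * E * y + - (2 * J ^+ 2).
  by rewrite /Pi_poly; ring.
move=> n12 n13 n23; rewrite !PiE => P1 P2 P3 y; rewrite PiE.
exact: cubic_factor n12 n13 n23 P1 P2 P3 y.
Qed.

Lemma subr_VJ a b J E r : r != 0 ->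
  E - VJ a b J r = Pi_poly a b J E (r ^+ 2) / (4 * r ^+ 2).
Proof. by move=> r0; rewrite /Pi_poly /VJ; field. Qed.

Lemma VJ_level_set a b J E y1 y2 y3 r : b != 0 ->
  (forall y, Pi_poly a b J E y = - b * (y - y1) * (y - y2) * (y - y3)) -> 0 < r ->
  E = VJ a b J r <-> [\/ r ^+ 2 = y1, r ^+ 2 = y2 | r ^+ 2 = y3].
Proof.
move=> b0 PiE r0; rewrite (rwP eqP) -subr_eq0 (subr_VJ a b J E (lt0r_neq0 r0)).
rewrite mulf_eq0 invr_eq0 mulf_eq0 pnatr_eq0 expf_eq0 (gt_eqF r0) andbF orbF.
rewrite PiE !mulf_eq0 oppr_eq0 (negbTE b0) !subr_eq0 -[(4 == 0)%N]/false orbF /=.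
by split => [/orP[/orP[]|]/eqP|[]->]; rewrite ?eqxx ?orbT; constructor.
Qed.

Lemma sqr_first_zeros (Z : R -> Prop) y1 y2 y3 r1 r2 :
  (forall r, 0 < r -> Z r <-> [\/ r ^+ 2 = y1, r ^+ 2 = y2 | r ^+ 2 = y3]) ->
  0 < y1 -> y1 < y2 -> y3 <= 0 \/ y2 < y3 ->
  0 < r1 -> r1 < r2 -> Z r1 -> Z r2 -> (forall r, 0 < r -> r < r2 -> Z r -> r = r1) ->
  r1 ^+ 2 = y1 /\ r2 ^+ 2 = y2.
Proof.
move=> Zsq y10 y12 y3out r10 r12 Zr1 Zr2 r1_min.
have r20 : 0 < r2 := lt_trans r10 r12.
have sq12 : r1 ^+ 2 < r2 ^+ 2 by rewrite (ltrXn2r 2 (ltW r10) r12).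
have sq10 : 0 < r1 ^+ 2 by rewrite exprn_gt0.
have sqrt_zero y : 0 < y -> y \in [:: y1; y2; y3] -> Z (Num.sqrt y).
  move=> y0 yin; apply/Zsq; first by rewrite sqrtr_gt0.
  by rewrite sqr_sqrtr ?ltW //; move: yin; rewrite !inE => /or3P[]/eqP->; constructor.
have sqrt_lt y : 0 < y -> y < r2 ^+ 2 -> Num.sqrt y < r2.
  move=> y0 yr2; rewrite -(ltr_pXn2r (_ : 0 < 2)%N) ?nnegrE ?sqrtr_ge0 ?ltW //.
  by rewrite sqr_sqrtr ?ltW.
have sq1 : r1 ^+ 2 = y1.
  have [s1r2|r2s1] := ltP (Num.sqrt y1) r2.
    have s10 : 0 < Num.sqrt y1 by rewrite sqrtr_gt0.
    have Zs1 : Z (Num.sqrt y1) by apply: sqrt_zero; rewrite ?inE ?eqxx.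
    by rewrite -(r1_min _ s10 s1r2 Zs1) sqr_sqrtr // ltW.
  have r2y1 : r2 ^+ 2 <= y1.
    by rewrite -(sqr_sqrtr (ltW y10)); apply: lerXn2r; rewrite // nnegrE ?sqrtr_ge0 ?ltW.
  by case: ((Zsq r1 r10).1 Zr1) => // r1y; exfalso; case: y3out; lra.
split => //; case: ((Zsq r2 r20).1 Zr2) => // r2y3.
- by move: sq12; rewrite sq1 r2y3; lra.
- have y20 : 0 < y2 := lt_trans y10 y12.
  have y2_lt : y2 < r2 ^+ 2 by rewrite r2y3; case: y3out; lra.
  have s20 : 0 < Num.sqrt y2 by rewrite sqrtr_gt0.
  have Zs2 : Z (Num.sqrt y2) by apply: sqrt_zero; rewrite ?inE ?eqxx ?orbT.
  have := r1_min _ s20 (sqrt_lt _ y20 y2_lt) Zs2.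
  by move/(congr1 (fun x => x ^+ 2)); rewrite sqr_sqrtr ?ltW // sq1; lra.
Qed.

Lemma cubic_gt0 b y1 y2 y3 y : y1 < y -> y < y2 -> 0 < b * (y - y3) ->
  0 < - b * (y - y1) * (y - y2) * (y - y3).
Proof.
move=> y1y yy2 b_pos.
have -> : - b * (y - y1) * (y - y2) * (y - y3) = (y - y1) * (y2 - y) * (b * (y - y3)).
  by ring.
by rewrite mulr_gt0 // mulr_gt0 // subr_gt0.
Qed.

Lemma continuous_inv_sqrt_cubic b y1 y2 y3 : {in `[y1, y2], forall y, 0 < b * (y - y3)} ->
  {in `]y1, y2[, continuous (fun y => 1 / Num.sqrt (- b * (y - y1) * (y - y2) * (y - y3)))}.
Proof.
move=> b_pos y /[dup] /subset_itv_oo_cc /b_pos by3; rewrite in_itv /= => /andP[y1y yy2].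
have cP : continuous (fun y => - b * (y - y1) * (y - y2) * (y - y3)).
  by apply: derivable_continuous => x; exact: ex_derive.
exact: continuous_inv_sqrt (cP y) (cubic_gt0 y1y yy2 by3).
Qed.

Lemma Tperiod_cubic_integral a b J E r1 r2 y1 y2 y3 :
  (forall y, Pi_poly a b J E y = - b * (y - y1) * (y - y2) * (y - y3)) ->
  {in `[y1, y2], forall y, 0 < b * (y - y3)} ->
  0 < r1 -> r1 < r2 -> r1 ^+ 2 = y1 -> r2 ^+ 2 = y2 ->
  Tperiod a b J E r1 r2 = ((Num.sqrt 2)%:E *
    \int[mu]_(y in `]y1, y2[) (1 / Num.sqrt (- b * (y - y1) * (y - y2) * (y - y3)))%:E)%E.
Proof.
move=> PiE b_pos r10 r12 sq1 sq2.
pose G y := 1 / Num.sqrt (- b * (y - y1) * (y - y2) * (y - y3)).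
pose c : R := Num.sqrt 2 / 2.
have c0 : 0 < c by rewrite divr_gt0 // sqrtr_gt0.
have cG : {in `]y1, y2[, continuous G} by exact: continuous_inv_sqrt_cubic.
have cG' : {in `]y1, y2[, continuous (fun y => c * G y)}.
  by move=> y /cG; apply: continuousM; exact: cst_continuous.
have G0 y : 0 <= G y by rewrite divr_ge0 ?sqrtr_ge0.
have dF (x : R^o) : is_derive x 1 (fun r : R => r ^+ 2) (2 * x).
  by apply: is_derive_eq; rewrite /GRing.scale /=; ring.
have cF' : continuous (fun r : R => 2 * r).
  by apply: derivable_continuous => x; exact: ex_derive.
have F'0 : {in `]r1, r2[, forall r, 0 < 2 * r}.
  by move=> r; rewrite in_itv /= => /andP[r1r _]; rewrite mulr_gt0 // (lt_trans r10).
have cG0 : {in `]y1, y2[, forall y, 0 <= c * G y} by move=> y _; rewrite mulr_ge0 // ltW.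
have := integration_by_substitution_C1_oo dF cF' r12 F'0; rewrite /= sq1 sq2.
move=> /(_ _ cG' cG0) subst.
(* [2 (E - V_J r) = P (r^2) / (2 r^2)], where [P] is the factored cubic. *)
have integrand : {in `]r1, r2[, forall r,
    1 / Num.sqrt (2 * (E - VJ a b J r)) = c * G (r ^+ 2) * (2 * r)}.
  move=> r; rewrite in_itv /= => /andP[r1r rr2].
  have r0 : 0 < r := lt_trans r10 r1r.
  have y1r : y1 < r ^+ 2 by rewrite -sq1 (ltrXn2r 2 (ltW r10) r1r).
  have ry2 : r ^+ 2 < y2 by rewrite -sq2 (ltrXn2r 2 (ltW r0) rr2).
  have r_in : r ^+ 2 \in `[y1, y2] by rewrite in_itv /= (ltW y1r) (ltW ry2).
  have P0 := cubic_gt0 y1r ry2 (b_pos _ r_in).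
  apply: eq_inv_sqrtr; first by rewrite !mulr_gt0 // invr_gt0 sqrtr_gt0.
  rewrite subr_VJ ?gt_eqF // PiE /G; set P := - b * _ * _ * _.
  have sP0 : 0 < Num.sqrt P by rewrite sqrtr_gt0.
  have sP2 : Num.sqrt P ^+ 2 = P by rewrite sqr_sqrtr // ltW.
  set sP := Num.sqrt P in sP0 sP2 *.
  have s22 : Num.sqrt 2 ^+ 2 = 2 :> R by rewrite sqr_sqrtr.
  rewrite -sP2 /c !exprMn ?expr_div_n s22.
  by field; rewrite ?gt_eqF.
rewrite /Tperiod.
have -> : (\int[mu]_(r in `]r1, r2[) (1 / Num.sqrt (2 * (E - VJ a b J r)))%:E =
           \int[mu]_(r in `]r1, r2[) (c * G (r ^+ 2) * (2 * r))%:E)%E.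
  by apply: eq_integral => r; rewrite inE => /integrand ->.
rewrite -subst ge0_continuous_integralZl ?ltW // muleA -EFinM.
by congr (_ * _)%E; congr EFin; rewrite /c; field.
Qed.

Lemma cubic_integral_sin_subst b y1 y2 y3 : y1 < y2 ->
  {in `[y1, y2], forall y, 0 < b * (y - y3)} ->
  (\int[mu]_(y in `]y1, y2[) (1 / Num.sqrt (- b * (y - y1) * (y - y2) * (y - y3)))%:E =
   2%:E * \int[mu]_(t in `]0%R, (pi / 2)%R[)
     (1 / Num.sqrt (b * (y1 * cos t ^+ 2 + y2 * sin t ^+ 2 - y3)))%:E)%E.
Proof.
move=> y12 b_pos.
pose G y := 1 / Num.sqrt (- b * (y - y1) * (y - y2) * (y - y3)).
pose S t := y1 * cos t ^+ 2 + y2 * sin t ^+ 2.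
pose S' t := 2 * (y2 - y1) * sin t * cos t.
pose p t := 1 / Num.sqrt (b * (S t - y3)).
have dS (t : R^o) : is_derive t 1 S (S' t).
  by apply: is_derive_eq; rewrite /S' /GRing.scale /=; ring.
have cS' : continuous S' by apply: derivable_continuous => t; exact: ex_derive.
have sin_cos_gt0 (t : R) : t \in `]0, pi / 2[ -> 0 < sin t /\ 0 < cos t.
  move=> tin; split; first exact: sin_gt0_pihalf.
  apply: cos_gt0_pihalf; move: tin; rewrite !in_itv /= => /andP[t0 ->].
  by rewrite andbT (lt_trans _ t0) // oppr_lt0 divr_gt0 ?pi_gt0.
have S'0 : {in `]0, pi / 2[, forall t, 0 < S' t}.
  by move=> t /sin_cos_gt0[st ct]; rewrite !mulr_gt0 // subr_gt0.
have S_in t : S t \in `[y1, y2].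
  have e1 : S t = y1 + (y2 - y1) * sin t ^+ 2 by rewrite /S cos2sin2; ring.
  have e2 : S t = y2 - (y2 - y1) * cos t ^+ 2 by rewrite /S sin2cos2; ring.
  have y12' : 0 <= y2 - y1 by rewrite subr_ge0 ltW.
  rewrite in_itv /= {1}e1 e2 lerDl gerBl.
  by apply/andP; split; apply: mulr_ge0; rewrite ?sqr_ge0.
have p_pos t : 0 < b * (S t - y3) := b_pos _ (S_in t).
have cp : continuous p.
  have cbS : continuous (fun t => b * (S t - y3)).
    by apply: derivable_continuous => t; exact: ex_derive.
  by move=> t; exact: continuous_inv_sqrt (cbS t) (p_pos t).
have integrand : {in `]0, pi / 2[, forall t, G (S t) * S' t = 2 * p t}.
  move=> t /sin_cos_gt0[st ct].
  have factor : - b * (S t - y1) * (S t - y2) * (S t - y3) =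
      ((y2 - y1) * sin t * cos t) ^+ 2 * (b * (S t - y3)).
    by rewrite /S !exprMn cos2sin2; ring.
  rewrite /G factor sqrtrM ?sqr_ge0 // sqrtr_sqr ger0_norm; last first.
    by rewrite !mulr_ge0 ?subr_ge0 ?ltW.
  have sq0 : 0 < Num.sqrt (b * (S t - y3)) by rewrite sqrtr_gt0.
  by rewrite /p /S'; field; rewrite !gt_eqF ?subr_gt0.
have S0 : S 0 = y1 by rewrite /S cos0 sin0 expr1n expr0n /= mulr1 mulr0 addr0.
have S_pihalf : S (pi / 2) = y2.
  by rewrite /S cos_pihalf sin_pihalf expr1n expr0n /= mulr1 mulr0 add0r.
have G0 : {in `]y1, y2[, forall y, 0 <= G y} by move=> y _; rewrite divr_ge0 ?sqrtr_ge0.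
have pihalf_gt0 : 0 < pi / 2 :> R by rewrite divr_gt0 ?pi_gt0.
have := integration_by_substitution_C1_oo dS cS' pihalf_gt0 S'0.
rewrite S0 S_pihalf => /(_ _ (continuous_inv_sqrt_cubic b_pos) G0) ->.
transitivity (\int[mu]_(t in `]0%R, (pi / 2)%R[) (2 * p t)%:E)%E.
  by apply: eq_integral => t; rewrite inE => /integrand <-.
apply: ge0_continuous_integralZl => [//|t _|t _]; first exact: cp.
by rewrite divr_ge0 ?sqrtr_ge0.
Qed.

End period.

Theorem lemma1 (R : realType) (a b J E r1 r2 y1 y2 y3 : R) :
  ((b < 0 /\ 0 < a /\ D1 a b J E /\ 0 < y1 /\ y1 < y2 /\ y2 < y3) \/
   (0 < b /\ 0 <= a /\ D2 a b J E /\ y3 < 0 /\ 0 < y1 /\ y1 < y2) \/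
   (0 < b /\ a < 0 /\ D3 a b J E /\ y3 < 0 /\ 0 < y1 /\ y1 < y2)) ->
  Pi_poly a b J E y1 = 0 -> Pi_poly a b J E y2 = 0 -> Pi_poly a b J E y3 = 0 ->
  (* r1 < r2 are the two smallest positive roots of E - V_J *)
  0 < r1 -> r1 < r2 -> E = VJ a b J r1 -> E = VJ a b J r2 ->
  (forall r : R, 0 < r -> r < r2 -> E = VJ a b J r -> r = r1) ->
  Tperiod a b J E r1 r2 =
    ((Num.sqrt 2)%:E * \int[@lebesgue_measure R]_(y in `]y1%R, y2%R[)
        (1 / Num.sqrt (- b * (y - y1) * (y - y2) * (y - y3)))%:E)%E /\
  Tperiod a b J E r1 r2 =
    ((2 * Num.sqrt 2)%:E * \int[@lebesgue_measure R]_(phi in `]0%R, (pi / 2)%R[)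
        (1 / Num.sqrt (b * (y1 * cos phi ^+ 2 + y2 * sin phi ^+ 2 - y3)))%:E)%E.
Proof.
(* The domain conditions D1, D2, D3 only ensure, in the paper, that the roots exist. *)
move=> cases P1 P2 P3 r10 r12 E1 E2 r1_min.
have [y10 y12 y3_out b_pos] : [/\ 0 < y1, y1 < y2, y3 <= 0 \/ y2 < y3 &
    {in `[y1, y2], forall y, 0 < b * (y - y3)}].
  case: cases => [[b0 [_ [_ [y10 [y12 y23]]]]]|[][b0 [_ [_ [y30 [y10 y12]]]]]];
    split => //; try by [right | left; exact: ltW];
    move=> y; rewrite in_itv /= => /andP[y1y yy2].
  - by rewrite -mulrNN mulr_gt0 ?oppr_gt0 // subr_lt0 (le_lt_trans yy2).
  - by rewrite mulr_gt0 // subr_gt0 (lt_le_trans _ y1y) // (lt_trans y30).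
  - by rewrite mulr_gt0 // subr_gt0 (lt_le_trans _ y1y) // (lt_trans y30).
have y1_in : y1 \in `[y1, y2] by rewrite in_itv /= lexx ltW.
have b0 : b != 0 by apply: contraTneq (b_pos _ y1_in) => ->; rewrite mul0r ltxx.
have [n12 n13 n23] : [/\ y1 != y2, y1 != y3 & y2 != y3].
  by split; apply/eqP => h; case: y3_out; lra.
have PiE := Pi_poly_factor n12 n13 n23 P1 P2 P3.
have [sq1 sq2] := sqr_first_zeros (fun r r0 => VJ_level_set b0 PiE r0)
  y10 y12 y3_out r10 r12 E1 E2 r1_min.
have T_y := Tperiod_cubic_integral PiE b_pos r10 r12 sq1 sq2.
split => //; rewrite T_y cubic_integral_sin_subst //.
by rewrite muleA -EFinM mulrC.
Qed.
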